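(* Let $0\le\gamma_1<\dots<\gamma_p\le1$ and for each $i$ let $(\gamma_{i,n})_n$ be $[0,1]$-valued with $|\gamma_{i,n}-\gamma_i|=O(1/n)$. Then for every $i\in\{1,\dots,p\}$ there exist $\delta_i>0$ and $N\in\mathbb{N}$ such that $\phi_{n,\gamma_{i,n}}'(u)\ge\phi_{n,\gamma_{j,n}}'(u)$ for all $u\in(\gamma_i-\delta_i,\gamma_i+\delta_i)\cap[0,1]$, all $j\in\{1,\dots,p\}$ and all $n\ge N$.
   Context: $[x]$ is the integer part. $\phi_{n,\alpha}(t)=\sum_{j=1+[(n-1)\alpha]}^n\binom{n}{j}t^j(1-t)^{n-j}$, so $\phi_{n,\alpha}'(t)=n\binom{n-1}{[(n-1)\alpha]}t^{[(n-1)\alpha]}(1-t)^{n-[(n-1)\alpha]-1}$. *)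

From mathcomp Require Import all_boot all_order all_algebra.
From mathcomp Require Import reals.
Set Implicit Arguments. Unset Strict Implicit. Unset Printing Implicit Defensive.
Import Order.TTheory GRing.Theory Num.Theory.
Local Open Scope ring_scope.

(* k_{n,alpha} = [(n-1) alpha], the integer part (alpha in [0,1], so the
   argument is nonnegative and Num.truncn is the floor). *)
Definition kidx {R : realType} (n : nat) (alpha : R) : nat :=
  Num.truncn ((n.-1)%:R * alpha).

Definition phi {R : realType} (n : nat) (alpha t : R) : R :=
  \sum_((kidx n alpha).+1 <= j < n.+1) ('C(n, j))%:R * t ^+ j * (1 - t) ^+ (n - j).

(* phi'_{n,alpha}(t) = n C(n-1,k) t^k (1-t)^(n-k-1), k = [(n-1)alpha],
   as given explicitly in the paper. *)
Definition phid {R : realType} (n : nat) (alpha t : R) : R :=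
  let k := kidx n alpha in
  n%:R * ('C(n.-1, k))%:R * t ^+ k * (1 - t) ^+ (n - k - 1).

From mathcomp Require Import all_boot all_order all_algebra.
From mathcomp Require Import reals.
From mathcomp Require Import zify ring lra.
Import Order.TTheory GRing.Theory Num.Theory.
Local Open Scope ring_scope.

(* Write B_m(k, u) = C(m, k) u^k (1 - u)^(m - k) for the binomial weight, so
   that phi'_{n,alpha}(u) = n B_{n-1}(k, u) with k = [(n-1) alpha].  Since
   gamma_{j,n} = gamma_j + O(1/n), the index k_j stays within a bounded
   distance K of (n-1) gamma_j.  Everything thus reduces to a statement on
   binomial weights: for al <> be in [0,1] and K >= 0 there are dl > 0 and M
   such that B_m(b, u) <= B_m(a, u) whenever m >= M, |a - m al| <= K,
   |b - m be| <= K and |u - al| < dl ("al separates be", [separates]).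

   By the symmetry B_m(k, u) = B_m(m - k, 1 - u) it suffices to treat al < be.
   - If al > 0, the ratio B_m(k+1, u) / B_m(k, u) = [odds] m k u decreases in
     k; taking c the midpoint of [a, b], B_m(b, u) <= B_m(a, u) as soon as
     odds(a) odds(c) <= 1, which for u <= al + dl and large m is a quadratic
     inequality in m with positive leading coefficient [odds_margin].
   - If al = 0, a is bounded while b >= m be / 2, and the crude bound
     C(m, b) <= 2^m wins against a tiny u.
   A common radius for the finitely many indices j concludes. *)

Lemma bin_le_exp2 (m k : nat) : ('C(m, k) <= 2 ^ m)%N.
Proof.
elim: m k => [|m IH] [|k] //=; first by rewrite bin0 expn_gt0.
by rewrite binS expnS; have := IH k.+1; have := IH k; lia.
Qed.

Section BinomialWeights.
Context {R : realType}.
Implicit Types (u : R) (m k a b c : nat).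

Definition bw m k u : R := ('C(m, k))%:R * u ^+ k * (1 - u) ^+ (m - k).

Lemma bw_ge0 m k u : 0 <= u <= 1 -> 0 <= bw m k u.
Proof.
by case/andP=> u0 u1; rewrite /bw !mulr_ge0 ?exprn_ge0 ?subr_ge0.
Qed.

Lemma bw_sym m k u : (k <= m)%N -> bw m k u = bw m (m - k) (1 - u).
Proof. by move=> km; rewrite /bw bin_sub // subKn // subKr mulrAC. Qed.

(* Ratio of consecutive binomial weights, B_m(k+1, u) = odds m k u * B_m(k, u). *)
Definition odds m k u : R := (m - k)%:R * u / ((k.+1)%:R * (1 - u)).

Lemma odds_ge0 m k u : 0 <= u < 1 -> 0 <= odds m k u.
Proof.
by case/andP=> u0 u1; rewrite /odds divr_ge0 ?mulr_ge0 ?subr_ge0 // ltW.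
Qed.

Lemma bw_step m k u :
  bw m k.+1 u * ((k.+1)%:R * (1 - u)) = bw m k u * ((m - k)%:R * u).
Proof.
rewrite /bw; case: (ltnP k m) => km; last first.
  by rewrite bin_small ?ltnS // (_ : m - k = 0)%N ?mul0r ?mulr0 //; lia.
have mk : (m - k = (m - k.+1).+1)%N by lia.
have binE : (k.+1)%:R * ('C(m, k.+1))%:R = (m - k)%:R * ('C(m, k))%:R :> R.
  by rewrite -!natrM mul_bin_left.
transitivity ((k.+1)%:R * ('C(m, k.+1))%:R * (u ^+ k * u * ((1 - u) ^+ (m - k.+1) * (1 - u)))).
  by rewrite exprSr; ring.
by rewrite binE -[_ * (1 - u)]exprSr -mk; ring.
Qed.

Lemma bw_succ m k u : u < 1 -> bw m k.+1 u = odds m k u * bw m k u.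
Proof.
move=> u1; have hk : (k.+1)%:R * (1 - u) != 0 by rewrite mulf_neq0 ?subr_eq0 ?gt_eqF.
by apply: (mulIf hk); rewrite bw_step /odds [RHS]mulrAC divfK // mulrC.
Qed.

Lemma odds_antimono m a c u : 0 <= u < 1 -> (a <= c)%N -> odds m c u <= odds m a u.
Proof.
case/andP=> u0 u1 ac.
have oddsE k : odds m k u = (m - k)%:R / (k.+1)%:R * (u / (1 - u)).
  by rewrite /odds invfM mulrACA.
rewrite !oddsE ler_wpM2r ?divr_ge0 ?subr_ge0 ?(ltW u1) //.
rewrite ler_pdivrMr ?ltr0n // mulrAC ler_pdivlMr ?ltr0n // -!natrM ler_nat.
nia.
Qed.

Lemma bw_shift_le m c t u : 0 <= u < 1 ->
  bw m (c + t) u <= odds m c u ^+ t * bw m c u.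
Proof.
move=> u01; have /andP[u0 u1] := u01.
elim: t => [|t IH]; first by rewrite addn0 expr0 mul1r.
rewrite addnS bw_succ // exprS -mulrA.
apply: ler_pM => //; first exact: odds_ge0.
- by apply: bw_ge0; rewrite u0 ltW.
- exact: odds_antimono (leq_addr _ _).
Qed.

Lemma bw_le_of_odds m a b c u : 0 <= u < 1 -> (a <= c <= b)%N -> (c - a <= b - c)%N ->
  odds m a u * odds m c u <= 1 -> bw m b u <= bw m a u.
Proof.
move=> u01 /andP[ac cb] hd hprod; have /andP[u0 u1] := u01.
have oa0 := @odds_ge0 m a u u01; have oc0 := @odds_ge0 m c u u01.
have oc1 : odds m c u <= 1.
  have oca := @odds_antimono m a c u u01 ac.
  have : odds m c u * odds m c u <= 1 by apply: le_trans hprod; exact: ler_wpM2r.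
  nra.
have hpow : odds m c u ^+ (b - c) * odds m a u ^+ (c - a) <= 1.
  apply: le_trans (ler_wpM2r (exprn_ge0 _ oa0) (ler_wiXn2l _ oc1 hd)) _; first done.
  by rewrite -exprMn mulrC exprn_ile1 // mulr_ge0.
have bwa0 : 0 <= bw m a u by apply: bw_ge0; rewrite u0 ltW.
have := bw_shift_le m c (b - c) u u01; rewrite subnKC // => /le_trans; apply.
have := bw_shift_le m a (c - a) u u01; rewrite subnKC // => hca.
apply: le_trans (ler_wpM2l (exprn_ge0 _ oc0) hca) _.
by rewrite mulrA -[leRHS]mul1r ler_wpM2r.
Qed.

End BinomialWeights.

Section OddsEstimates.
Context {R : realType}.
Implicit Types (al mu g u K x : R).

Lemma nat_ge_eventually x : exists M : nat, forall m : nat, (M <= m)%N -> x <= m%:R.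
Proof.
exists (Num.truncn x).+1 => m hm.
by apply: le_trans (ltW (truncnS_gt x)) _; rewrite ler_nat.
Qed.

(* Leading coefficient of (a+1)(c+1)(1-u0)^2 - (m-a)(m-c)u0^2 as a polynomial
   in m, when a ~ m al and c ~ m mu. *)
Definition odds_margin al mu u0 : R :=
  al * mu * (1 - u0) ^+ 2 - (1 - al) * (1 - mu) * u0 ^+ 2.

Lemma odds_margin_pos {al g} : 0 < al -> 0 < g -> al + g <= 1 ->
  let mu := al + g / 2 in let dl := al * (1 - al) * g / 20 in
  0 < dl /\ al + dl < 1 /\ 0 < odds_margin al mu (al + dl).
Proof.
move=> ha hg hag mu dl.
have h1a : 0 < 1 - al by lra.
have hdl : 0 < dl by rewrite /dl divr_gt0 ?mulr_gt0.
have hdlg : dl <= g / 20 by rewrite /dl ler_pM2r ?invr_gt0 //; nra.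
have hmu1 : mu <= 1 by rewrite /mu; lra.
have hmu0 : 0 <= mu by rewrite /mu; lra.
split=> //; split; first lra.
have e10 : 10 * dl = al * (1 - al) * (mu - al) by rewrite /dl /mu; field.
have -> : odds_margin al mu (al + dl) = 10 * dl + al * mu * (dl ^+ 2 - 2 * dl * (1 - al))
      - (1 - al) * (1 - mu) * (2 * al * dl + dl ^+ 2).
  by rewrite e10 /odds_margin; ring.
have q1 : 0 <= al * mu <= 1 by apply/andP; split; nra.
have q2 : 0 <= (1 - al) * (1 - mu) <= 1 by apply/andP; split; nra.
have t1 : - (2 * dl) <= dl ^+ 2 - 2 * dl * (1 - al) <= dl by rewrite expr2; apply/andP; split; nra.
have t2 : 0 <= 2 * al * dl + dl ^+ 2 <= 3 * dl by rewrite expr2; apply/andP; split; nra.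
nra.
Qed.

Lemma margin_dominates al mu u0 K x : 0 < al -> al < mu -> mu <= 1 ->
  0 <= u0 < 1 -> 0 <= K -> 1 <= x -> 4 * K + K ^+ 2 <= x * odds_margin al mu u0 ->
  (x * (1 - al) + K) * (x * (1 - mu) + K) * u0 ^+ 2
    <= (x * al - K) * (x * mu - K) * (1 - u0) ^+ 2.
Proof.
move=> ha hm hm1 /andP[hu0 hu1] hK hx hxD.
rewrite -subr_le0.
have -> : (x * (1 - al) + K) * (x * (1 - mu) + K) * u0 ^+ 2
    - (x * al - K) * (x * mu - K) * (1 - u0) ^+ 2
  = - x * (x * odds_margin al mu u0)
    + x * K * ((2 - al - mu) * u0 ^+ 2 + (al + mu) * (1 - u0) ^+ 2)
    + K ^+ 2 * (u0 ^+ 2 - (1 - u0) ^+ 2).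
  by rewrite /odds_margin; ring.
have w1 : (2 - al - mu) * u0 ^+ 2 + (al + mu) * (1 - u0) ^+ 2 <= 4.
  have : u0 ^+ 2 <= 1 by rewrite expr_le1 //; lra.
  have : (1 - u0) ^+ 2 <= 1 by rewrite expr_le1 //; lra.
  nra.
have w2 : u0 ^+ 2 - (1 - u0) ^+ 2 <= 1 by rewrite !expr2; nra.
have xK : 0 <= x * K by nra.
have K2 : 0 <= K ^+ 2 := sqr_ge0 K.
have := ler_wpM2l xK w1; have := ler_wpM2l K2 w2.
have := ler_wpM2l (le_trans ler01 hx : 0 <= x) hxD.
have : K ^+ 2 <= x * K ^+ 2 by rewrite -{1}(mul1r (K ^+ 2)) ler_wpM2r.
nra.
Qed.

Lemma odds_product_le1 al mu u0 K (m a c : nat) u :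
  0 < al -> al < mu -> mu <= 1 -> 0 <= u0 < 1 -> 0 <= K ->
  1 <= m%:R :> R -> 4 * K + K ^+ 2 <= m%:R * odds_margin al mu u0 -> K <= m%:R * al ->
  (a <= m)%N -> (c <= m)%N -> `|a%:R - m%:R * al| <= K -> `|c%:R - m%:R * mu| <= K ->
  0 <= u <= u0 -> odds m a u * odds m c u <= 1.
Proof.
move=> ha hm hm1 u0_01 hK hx hxD hKa am cm.
rewrite !ler_norml => /andP[ha1 ha2] /andP[hc1 hc2] /andP[hu0 hu].
have hu1 : 0 < 1 - u by lra.
rewrite /odds mulf_div ler_pdivrMr ?mul1r ?mulr_gt0 ?ltr0n // !natrB // -!natr1.
set x := m%:R; set xa := a%:R; set xc := c%:R.
have core := @margin_dominates al mu u0 K x ha hm hm1 u0_01 hK hx hxD.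
have num_le : (x - xa) * (x - xc) <= (x * (1 - al) + K) * (x * (1 - mu) + K).
  by apply: ler_pM; rewrite ?subr_ge0 ?ler_nat //; lra.
have u2_le : u ^+ 2 <= u0 ^+ 2 by rewrite !expr2; apply: ler_pM.
have den_ge : (x * al - K) * (x * mu - K) <= (xa + 1) * (xc + 1) by apply: ler_pM; nra.
have v2_ge : (1 - u0) ^+ 2 <= (1 - u) ^+ 2 by rewrite !expr2; apply: ler_pM; lra.
have lhs_le : (x - xa) * (x - xc) * u ^+ 2 <= (x * (1 - al) + K) * (x * (1 - mu) + K) * u0 ^+ 2.
  by apply: ler_pM; rewrite ?sqr_ge0 ?mulr_ge0 ?subr_ge0 ?ler_nat.
have rhs_ge : (x * al - K) * (x * mu - K) * (1 - u0) ^+ 2 <= (xa + 1) * (xc + 1) * (1 - u) ^+ 2.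
  by apply: ler_pM; rewrite ?sqr_ge0 ?mulr_ge0 //; nra.
have -> : (x - xa) * u * ((x - xc) * u) = (x - xa) * (x - xc) * u ^+ 2 by rewrite expr2; ring.
have -> : (xa + 1) * (1 - u) * ((xc + 1) * (1 - u)) = (xa + 1) * (xc + 1) * (1 - u) ^+ 2
  by rewrite expr2; ring.
exact: le_trans lhs_le (le_trans core rhs_ge).
Qed.

Lemma midpoint_near {m a b : nat} {al be K : R} : (a <= b)%N ->
  `|a%:R - m%:R * al| <= K -> `|b%:R - m%:R * be| <= K ->
  let c := ((a + b) %/ 2)%N in
  [/\ (a <= c <= b)%N, (c - a <= b - c)%N & `|c%:R - m%:R * ((al + be) / 2)| <= K + 1].
Proof.
move=> ab; rewrite !ler_norml => /andP[ha1 ha2] /andP[hb1 hb2] c.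
have hc : (c * 2 <= a + b <= c * 2 + 1)%N by rewrite /c; lia.
split; [rewrite /c; lia | rewrite /c; lia |].
move: hc; rewrite -!(ler_nat R) !natrD natrM => /andP[hc1 hc2].
rewrite ler_norml; apply/andP; split; lra.
Qed.

End OddsEstimates.

Section Separation.
Context {R : realType}.
Implicit Types (al be K u : R).

Definition separates al be K (pred_u : R -> Prop) : Prop :=
  exists M : nat, forall (m a b : nat) u, (M <= m)%N -> (a <= m)%N -> (b <= m)%N ->
    `|a%:R - m%:R * al| <= K -> `|b%:R - m%:R * be| <= K -> pred_u u ->
    bw m b u <= bw m a u.

Lemma separate_right_pos al be K : 0 < al -> al < be -> be <= 1 -> 0 <= K ->
  exists2 dl : R, 0 < dl & separates al be K (fun u => 0 <= u <= al + dl).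
Proof.
move=> ha hab hb1 hK; set g := be - al.
have hg : 0 < g by rewrite subr_gt0.
have hag : al + g <= 1 by rewrite /g; lra.
have [hdl [u0_lt1 hD]] := odds_margin_pos ha hg hag.
set mu := al + g / 2 in hD; set dl := al * (1 - al) * g / 20 in hdl u0_lt1 hD.
have emu : mu = (al + be) / 2 by rewrite /mu /g; field.
have [hmu hmu1] : al < mu /\ mu <= 1 by rewrite emu; split; lra.
pose K' := K + 1.
have [M1 hM1] := nat_ge_eventually (1 : R).
have [M2 hM2] := nat_ge_eventually ((4 * K' + K' ^+ 2) / odds_margin al mu (al + dl)).
have [M3 hM3] := nat_ge_eventually (K' / al).
have [M4 hM4] := nat_ge_eventually ((2 * K + 1) / g).
exists dl => //; exists (M1 + M2 + M3 + M4)%N => m a b u hm am bm hA hB hu.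
have x1 : 1 <= m%:R :> R by apply: hM1; clear -hm; lia.
have x2 : 4 * K' + K' ^+ 2 <= m%:R * odds_margin al mu (al + dl).
  by rewrite -ler_pdivrMr //; apply: hM2; clear -hm; lia.
have x3 : K' <= m%:R * al by rewrite -ler_pdivrMr //; apply: hM3; clear -hm; lia.
have x4 : 2 * K + 1 <= m%:R * g by rewrite -ler_pdivrMr ?subr_gt0 //; apply: hM4; clear -hm; lia.
have ab : (a <= b)%N.
  have : m%:R * g = m%:R * be - m%:R * al by rewrite mulrBr.
  move: hA hB; rewrite -(ler_nat R) !ler_norml => /andP[? ?] /andP[? ?]; lra.
have [acb hc hC] := midpoint_near ab hA hB.
have hu1 : 0 <= u < 1 by case/andP: hu => ? ?; apply/andP; split; lra.
apply: (bw_le_of_odds _ _ _ _ _ hu1 acb hc).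
apply: (@odds_product_le1 _ al mu (al + dl) K' m a _ u ha) => //.
- by rewrite u0_lt1 addr_ge0 ?ltW.
- by rewrite /K'; lra.
- by case/andP: acb => _ cb; apply: leq_trans cb bm.
- by apply: le_trans hA _; rewrite /K' lerDl.
- by rewrite emu.
Qed.

Lemma small_pow_dominates (m s d : nat) u : 0 <= u -> 2 ^+ s.+1 * u <= 1 ->
  (m <= s * d)%N -> 2 ^+ m * u ^+ d <= (1 - u) ^+ d.
Proof.
move=> u0 hu md.
have p0 : 0 <= (2 : R) ^+ s * u by rewrite mulr_ge0 ?exprn_ge0.
have p1 : (2 : R) ^+ s * u <= 1 - u.
  have : 1 <= (2 : R) ^+ s by rewrite exprn_ege1 // ler1n.
  by move: hu; rewrite exprS -mulrA; nra.
apply: le_trans (_ : (2 : R) ^+ (s * d) * u ^+ d <= _).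
  by rewrite ler_wpM2r ?exprn_ge0 // ler_eXn2l // ltr1n.
by rewrite exprM -exprMn lerXn2r // nnegrE // subr_ge0; lra.
Qed.

Lemma bw_le_far (m a b : nat) u : 0 <= u <= 1 -> (a <= b <= m)%N ->
  2 ^+ m * u ^+ (b - a) <= (1 - u) ^+ (b - a) -> bw m b u <= bw m a u.
Proof.
move=> /andP[u0 u1] /andP[ab bm]; rewrite /bw; set d := (b - a)%N => hpow.
have -> : (m - a = (m - b) + d)%N by rewrite /d; lia.
have eb : b = (a + d)%N by rewrite /d subnKC.
rewrite {2}eb !exprD.
have P0 : 0 <= u ^+ a * (1 - u) ^+ (m - b) by rewrite mulr_ge0 ?exprn_ge0 ?subr_ge0.
have Cb : ('C(m, b))%:R <= (2 : R) ^+ m by rewrite -natrX ler_nat bin_le_exp2.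
have Ca : 1 <= ('C(m, a))%:R :> R by rewrite ler1n bin_gt0 (leq_trans ab).
apply: le_trans (_ : u ^+ a * (1 - u) ^+ (m - b) * (2 ^+ m * u ^+ d) <= _).
  have -> : ('C(m, b))%:R * (u ^+ a * u ^+ d) * (1 - u) ^+ (m - b)
    = ('C(m, b))%:R * (u ^+ a * (1 - u) ^+ (m - b) * u ^+ d) by ring.
  by rewrite [leRHS]mulrCA; apply: ler_wpM2r => //; rewrite mulr_ge0 ?exprn_ge0.
apply: le_trans (_ : u ^+ a * (1 - u) ^+ (m - b) * (1 - u) ^+ d <= _).
  exact: ler_wpM2l.
have -> : ('C(m, a))%:R * u ^+ a * ((1 - u) ^+ (m - b) * (1 - u) ^+ d)
  = ('C(m, a))%:R * (u ^+ a * (1 - u) ^+ (m - b) * (1 - u) ^+ d) by ring.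
by rewrite -[leLHS]mul1r; apply: ler_wpM2r => //; rewrite mulr_ge0 ?exprn_ge0 ?subr_ge0.
Qed.

(* Case 0 = al < be: here b - a >= m be / 2, so [bw_le_far] applies. *)
Lemma separate_right_zero be K : 0 < be -> 0 <= K ->
  exists2 dl : R, 0 < dl & separates 0 be K (fun u => 0 <= u <= dl).
Proof.
move=> hb hK.
have [s0 hs0] := nat_ge_eventually (2 / be); set s := s0.
have hs : 2 <= s%:R * be by rewrite -ler_pdivrMr //; exact: hs0.
have [M hM] := nat_ge_eventually (4 * K / be).
exists (2 ^+ s.+1)^-1; first by rewrite invr_gt0 exprn_gt0.
exists M => m a b u hm am bm hA hB /andP[u0 u1].
have x1 : 4 * K <= m%:R * be by rewrite -ler_pdivrMr //; exact: hM.
move: hA hB; rewrite mulr0 subr0 ger0_norm ?ler0n // ler_norml => hA /andP[hB1 hB2].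
have ab : (a <= b)%N by rewrite -(ler_nat R); nra.
apply: bw_le_far; first by rewrite u0 (le_trans u1) // invf_le1 ?exprn_ege1 ?exprn_gt0 ?ler1n.
  by rewrite ab.
apply: (small_pow_dominates m s) => //; first by rewrite -ler_pdivlMl ?exprn_gt0 // mulr1.
rewrite -(ler_nat R) natrM natrB //.
have : m%:R * 2 <= m%:R * (s%:R * be) :> R by apply: ler_wpM2l.
nra.
Qed.

Lemma separate_right al be K : 0 <= al -> al < be -> be <= 1 -> 0 <= K ->
  exists2 dl : R, 0 < dl & separates al be K (fun u => 0 <= u <= al + dl).
Proof.
move=> ha0 hab hb1 hK; have [al0 | al_neq0] := eqVneq al 0; last first.
  by apply: separate_right_pos; rewrite // lt_def al_neq0.
rewrite al0 in hab *; have [dl hdl [M hM]] := separate_right_zero be K hab hK.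
by exists dl => //; exists M => m a b u; rewrite add0r; exact: hM.
Qed.

Lemma separate_left al be K : 0 <= be -> be < al -> al <= 1 -> 0 <= K ->
  exists2 dl : R, 0 < dl & separates al be K (fun u => al - dl <= u <= 1).
Proof.
move=> hb0 hba ha1 hK.
have [dl hdl [M hM]] := @separate_right (1 - al) (1 - be) K ltac:(lra) ltac:(lra) ltac:(lra) hK.
have flip (k m : nat) (g : R) : (k <= m)%N -> `|(m - k)%:R - m%:R * (1 - g)| = `|k%:R - m%:R * g|.
  by move=> km; rewrite natrB // -normrN; congr `|_|; ring.
exists dl => //; exists M => m a b u hm am bm hA hB /andP[hu0 hu1].
rewrite (bw_sym m a u am) (bw_sym m b u bm); apply: hM; rewrite ?leq_subr ?flip //.
by apply/andP; split; lra.
Qed.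
Lemma separates_sub al be K (P Q : R -> Prop) :
  (forall u, P u -> Q u) -> separates al be K Q -> separates al be K P.
Proof. by move=> PQ [M hM]; exists M => m a b u ? ? ? ? ? /PQ; apply: hM. Qed.

Lemma separate_near {al be K : R} : 0 <= al <= 1 -> 0 <= be <= 1 -> al != be -> 0 <= K ->
  exists2 dl : R, 0 < dl & separates al be K (fun u => al - dl < u < al + dl /\ 0 <= u <= 1).
Proof.
move=> /andP[a0 a1] /andP[b0 b1] ab K0; case: ltgtP ab => // [lt_ab | lt_ba] _.
- have [dl dl0 sep] := separate_right al be K a0 lt_ab b1 K0.
  by exists dl => //; apply: separates_sub sep => u [/andP[_ /ltW ->] /andP[-> _]].
- have [dl dl0 sep] := separate_left al be K b0 lt_ba a1 K0.
  by exists dl => //; apply: separates_sub sep => u [/andP[/ltW -> _] /andP[_ ->]].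
Qed.
End Separation.

Section QuantileIndices.
Context {R : realType}.

Definition close_at_rate (x : nat -> R) (g : R) : Prop :=
  exists C : R, exists N0 : nat, forall n : nat, (N0 <= n)%N -> `|x n - g| <= C / n%:R.

Lemma phid_bw (n : nat) (x t : R) : (1 <= n)%N -> phid n x t = n%:R * bw n.-1 (kidx n x) t.
Proof. by move=> n1; rewrite /phid /bw subnAC subn1 mulrA mulrA. Qed.

Lemma kidx_le (n : nat) (x : R) : 0 <= x <= 1 -> (kidx n x <= n.-1)%N.
Proof.
case/andP=> x0 x1; rewrite -(ler_nat R) /kidx.
have /andP[k1 _] := truncn_itv (mulr_ge0 (ler0n R n.-1) x0).
by apply: le_trans k1 _; rewrite -[leRHS]mulr1 ler_wpM2l.
Qed.

Lemma kidx_close {x : nat -> R} {g : R} : (forall n, 0 <= x n <= 1) -> close_at_rate x g ->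
  exists2 K : R, 0 <= K & exists N : nat, forall n : nat, (N <= n)%N ->
    `|(kidx n (x n))%:R - (n.-1)%:R * g| <= K.
Proof.
move=> x01 [C [N0 hC]]; exists (1 + `|C|); first by rewrite addr_ge0.
exists N0.+1 => n hn; have n0 : (0 < n)%N by lia.
have /andP[x0 _] := x01 n.
have /andP[k1 k2] := truncn_itv (mulr_ge0 (ler0n R n.-1) x0).
have -> : (kidx n (x n))%:R - (n.-1)%:R * g
    = ((kidx n (x n))%:R - (n.-1)%:R * x n) + (n.-1)%:R * (x n - g) by ring.
apply: le_trans (ler_normD _ _) _; rewrite lerD //.
  by rewrite ler_norml -natr1 in k2 *; apply/andP; split; rewrite /kidx; lra.
rewrite normrM ger0_norm //.
apply: le_trans (_ : (n.-1)%:R * (`|C| / n%:R) <= _).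
  by apply: ler_wpM2l => //; apply: le_trans (hC n _) _; [lia | rewrite ler_pM2r ?invr_gt0 ?ltr0n ?ler_norm].
by rewrite mulrCA -[leRHS]mulr1 ler_wpM2l // ler_pdivrMr ?ltr0n // mul1r ler_nat leq_pred.
Qed.

Lemma phid_dominated (ga gb : R) (xa xb : nat -> R) :
  0 <= ga <= 1 -> 0 <= gb <= 1 -> ga != gb ->
  (forall n, 0 <= xa n <= 1) -> (forall n, 0 <= xb n <= 1) ->
  close_at_rate xa ga -> close_at_rate xb gb ->
  exists2 dl : R, 0 < dl & exists N : nat, forall u : R,
    ga - dl < u < ga + dl -> 0 <= u <= 1 ->
    forall n : nat, (N <= n)%N -> phid n (xb n) u <= phid n (xa n) u.
Proof.
move=> ga01 gb01 gab xa01 xb01 /(kidx_close xa01) [Ka Ka0 [Na hNa]].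
move=> /(kidx_close xb01) [Kb Kb0 [Nb hNb]].
have [dl dl0 [M hM]] := separate_near ga01 gb01 gab (addr_ge0 Ka0 Kb0).
exists dl => //; exists (Na + Nb + M).+1 => u hu u01 n hn.
have n1 : (1 <= n)%N by clear -hn; lia.
have [na nb nm] : [/\ (Na <= n)%N, (Nb <= n)%N & (M <= n.-1)%N] by clear -hn; split; lia.
rewrite !phid_bw //; apply: ler_wpM2l => //; apply: hM; rewrite ?kidx_le //.
- by apply: le_trans (hNa n na) _; rewrite lerDl.
- by apply: le_trans (hNb n nb) _; rewrite lerDr.
Qed.
End QuantileIndices.

Lemma finite_common_radius {R : realType} (T : finType) (P : T -> R -> nat -> Prop) :
  (forall j d N d' N', P j d N -> 0 < d' <= d -> (N <= N')%N -> P j d' N') ->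
  (forall j, exists2 d : R, 0 < d & exists N : nat, P j d N) ->
  exists2 d : R, 0 < d & exists N : nat, forall j, P j d N.
Proof.
move=> Pmono Pj.
suff [d d0 [N hN]] : exists2 d : R, 0 < d & exists N : nat, forall j, j \in enum T -> P j d N.
  by exists d => //; exists N => j; apply: hN; rewrite mem_enum.
elim: (enum T) => [|j s [d2 d20 [N2 hN2]]]; first by exists 1 => //; exists 0%N.
have [d1 d10 [N1 hN1]] := Pj j.
have d0 : 0 < Num.min d1 d2 by rewrite lt_min d10.
exists (Num.min d1 d2) => //; exists (maxn N1 N2) => k; rewrite inE => /predU1P[->|ks].
  by apply: Pmono hN1 _ (leq_maxl _ _); rewrite d0 ge_min lexx.
by apply: Pmono (hN2 k ks) _ (leq_maxr _ _); rewrite d0 ge_min lexx orbT.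
Qed.

Theorem lemma5p1 (R : realType) (p : nat) (gam : 'I_p -> R)
  (gamn : 'I_p -> nat -> R)
  (hmono : forall i j : 'I_p, (i < j)%N -> gam i < gam j)
  (hg0 : forall i, 0 <= gam i) (hg1 : forall i, gam i <= 1)
  (hrange : forall i n, 0 <= gamn i n <= 1)
  (hO : forall i, exists C : R, exists N0 : nat, forall n : nat, (N0 <= n)%N ->
          `|gamn i n - gam i| <= C / n%:R) :
  forall i : 'I_p, exists delta : R, 0 < delta /\
    exists N : nat, forall u : R,
      gam i - delta < u < gam i + delta -> 0 <= u <= 1 ->
      forall (j : 'I_p) (n : nat), (N <= n)%N ->
        phid n (gamn j n) u <= phid n (gamn i n) u.
Proof.
move=> i; pose dominated j d N := forall u : R, gam i - d < u < gam i + d -> 0 <= u <= 1 ->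
  forall n : nat, (N <= n)%N -> phid n (gamn j n) u <= phid n (gamn i n) u.
have [d d0 [N hN]] : exists2 d : R, 0 < d & exists N : nat, forall j, dominated j d N.
  apply: finite_common_radius => [j d N d' N' hd /andP[_ dd] NN u hu|j].
    by move=> u01 n hn; apply: hd (leq_trans NN hn); move: hu => /andP[? ?]; apply/andP; lra.
  have [-> | ij] := eqVneq j i; first by exists 1 => //; exists 0%N => u *; exact: lexx.
  have gam01 k : 0 <= gam k <= 1 by rewrite hg0 hg1.
  have gij : gam i != gam j.
    case: (ltngtP i j) => [/hmono/lt_eqF -> | /hmono/gt_eqF -> | /val_inj eq_ij] //.
    by rewrite eq_ij eqxx in ij.
  exact: phid_dominated (gam01 i) (gam01 j) gij (hrange i) (hrange j) (hO i) (hO j).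
by exists d; split => //; exists N => u hu u01 j; exact: hN.
Qed.
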